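(* Let $d\ge2$, $\xi>0$, let $\sigma:\xi\mathbb{Z}^d\to\mathbb{R}$ be a generalized mass configuration and let $R_1>0$ be such that $\operatorname{supp}\sigma\subset\hat B_{R_1}$. Then for every $R_2>R_1+\xi$, $$\operatorname{GDS}_{R_2}(\operatorname{GDS}_{R_1}(\sigma))=\operatorname{GDS}_{R_2}(\sigma).$$
   Context: A generalized mass configuration on $\xi\mathbb{Z}^d$ is a bounded function with finite support. $\hat B_R:=B(0,R)\cap\xi\mathbb{Z}^d$. Neighbours $y'\sim y$ are lattice points at distance $\xi$; $\Delta f(y)=\frac{1}{2d\xi^2}\sum_{y'\sim y}(f(y')-f(y))$; toppling at $x$ is $T_x\eta(y):=\eta(y)+\eta_+(x)\xi^2\Delta\delta_x(y)$ (if $\eta(x)>0$, remove the mass $\eta(x)$ from $x$ and add $\eta(x)/(2d)$ to each neighbour; otherwise do nothing). For a generalized mass configuration $\tau$ with $\operatorname{supp}\tau\subset\hat B_R$, $\operatorname{GDS}_R(\tau)$ is the pointwise limit of the configurations obtained from $\tau$ by successively toppling at the points of a sequence in $\hat B_R$ in which every point of $\hat B_R$ occurs infinitely often; this limit exists, does not depend on the sequence, is supported in $\hat B_R\cup\partial\hat B_R$ (where $\partial S=\{y\notin S:\exists y'\in S,\ y\sim y'\}$), and equals $-\Delta v$ where $v(x)=\sup\{f(x):\Delta f\ge0\text{ in }\hat B_R,\ f\le U^\tau\text{ in }\xi\mathbb{Z}^d\}$, $U^\tau$ being the discrete potential of $\tau$ (satisfying $-\Delta U^\tau=\tau$). *)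

From HB Require Import structures.
From mathcomp Require Import all_boot all_order all_algebra.
From mathcomp Require Import all_classical all_reals all_analysis.
Set Implicit Arguments. Unset Strict Implicit. Unset Printing Implicit Defensive.
Import Order.TTheory GRing.Theory Num.Theory.
Import numFieldNormedType.Exports.
Local Open Scope ring_scope.
Local Open Scope classical_set_scope.

(* The lattice xi Z^d is parametrised by Z^d: the integer vector k stands for
   the lattice point xi * k. *)
Definition pt (d : nat) := 'rV[int]_d.

Definition evec (d : nat) (i : 'I_d) : pt d := delta_mx 0 i.

(* (squared) Euclidean norm of the lattice point xi*k is xi^2 * sum k_i^2 *)
Definition sqnorm (R : realType) (d : nat) (k : pt d) : R :=
  \sum_(i < d) ((k 0 i)%:~R) ^+ 2.

Definition inBall (R : realType) (d : nat) (xi Rad : R) (k : pt d) : Prop :=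
  xi ^+ 2 * sqnorm R k < Rad ^+ 2.

Definition dlap (R : realType) (d : nat) (xi : R) (f : pt d -> R) (y : pt d) : R :=
  (2 * d%:R * xi ^+ 2)^-1 *
  \sum_(i < d) ((f (y + evec i) - f y) + (f (y - evec i) - f y)).

Definition dirac (R : realType) (d : nat) (x : pt d) : pt d -> R :=
  fun y => if y == x then 1 else 0.

Definition topple (R : realType) (d : nat) (xi : R) (x : pt d) (eta : pt d -> R)
  : pt d -> R :=
  fun y => eta y + Num.max (eta x) 0 * (xi ^+ 2 * dlap xi (dirac R x) y).

Fixpoint topple_seq (R : realType) (d : nat) (xi : R) (s : nat -> pt d)
  (tau : pt d -> R) (n : nat) : pt d -> R :=
  match n with
  | 0 => tau
  | n.+1 => topple xi (s n) (topple_seq xi s tau n)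
  end.

Definition exhaustive_seq (R : realType) (d : nat) (xi Rad : R) (s : nat -> pt d)
  : Prop :=
  (forall n, inBall xi Rad (s n)) /\
  (forall x, inBall xi Rad x -> forall N : nat, exists2 n : nat, (N <= n)%N & s n = x).

Definition topple_limit (R : realType) (d : nat) (xi : R) (s : nat -> pt d)
  (tau eta : pt d -> R) : Prop :=
  forall y, (fun n => topple_seq xi s tau n y) @ \oo --> eta y.

Definition gen_mass_config (R : realType) (d : nat) (tau : pt d -> R) : Prop :=
  (exists M : R, forall y, `|tau y| <= M) /\
  (exists supp : seq (pt d), forall y, tau y != 0 -> y \in supp).

From Pilot Require Import Defs.
From mathcomp Require Import all_boot all_order all_algebra.
From mathcomp Require Import all_classical all_reals all_analysis.
From mathcomp Require Import ring lra zify.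

(* Both sides are identified through the least-action description of toppling limits.
   Along an exhaustive toppling sequence the partial odometers (mass emitted so far from each
   site) increase, and they stay bounded because toppling a mass m raises the second moment
   sum_y |y|^2 eta(y) by exactly m.  Their limit u is an odometer for the limit eta:
   u >= 0 vanishes off the ball, eta = tau + Delta u, eta <= 0 on the ball and eta >= 0 where
   u > 0.  Such an odometer is unique: at a positive maximum of the difference w of two of
   them, lap w >= 0, so w is constant along a coordinate ray, which leaves the ball, where w
   vanishes.
   Finally, if u1 stabilises sigma in B_R1 and u2 stabilises the result in B_R2, then u1 + u2
   is an odometer for sigma in B_R2. *)

Set Implicit Arguments. Unset Strict Implicit. Unset Printing Implicit Defensive.
Import Order.TTheory GRing.Theory Num.Theory.
Import numFieldNormedType.Exports.
Local Open Scope ring_scope.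
Local Open Scope classical_set_scope.

Lemma cvg_le_io (R : realType) (f : nat -> R) y c : f @ \oo --> y ->
  (forall N, exists2 n, (N <= n)%N & f n <= c) -> y <= c.
Proof.
move=> fy h; rewrite leNgt; apply/negP => cy.
have [N _ HN] := cvgr_gt _ fy _ cy.
have [n Nn fn] := h N; have := HN n Nn; rewrite /=; lra.
Qed.

Lemma cvg_ge_io (R : realType) (f : nat -> R) y c : f @ \oo --> y ->
  (forall N, exists2 n, (N <= n)%N & c <= f n) -> c <= y.
Proof.
move=> fy h; rewrite leNgt; apply/negP => cy.
have [N _ HN] := cvgr_lt _ fy _ cy.
have [n Nn fn] := h N; have := HN n Nn; rewrite /=; lra.
Qed.

Lemma seq_argmax (R : realType) (T : eqType) (F : seq T) (f : T -> R) a : a \in F ->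
  exists2 z, z \in F & forall y, y \in F -> f y <= f z.
Proof.
elim: F a => [//|b F IH] a _.
case: F IH => [|b' F'] IH.
  by exists b; rewrite ?mem_head // => y; rewrite inE => /eqP ->.
have [z' zF zm] := IH b' (mem_head _ _).
case: (leP (f b) (f z')) => h.
  exists z'; first by rewrite inE zF orbT.
  by move=> y; rewrite inE => /orP [/eqP ->|/zm].
exists b; first exact: mem_head.
move=> y; rewrite inE => /orP [/eqP ->//|/zm hy]; exact: (le_trans hy (ltW h)).
Qed.

Section Laplacian.
Variables (R : realType) (d : nat).

(* [xi^2 * dlap xi] (see [dlapE]): the mesh drops out of toppling. *)
Definition lap (f : pt d -> R) (y : pt d) : R :=
  (2 * d%:R)^-1 * \sum_(i < d) ((f (y + evec i) - f y) + (f (y - evec i) - f y)).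

Lemma lapDM f g c y : lap (fun z => f z + c * g z) y = lap f y + c * lap g y.
Proof.
rewrite /lap mulrCA -mulrDr; congr (_ * _); rewrite mulr_sumr -big_split.
apply: eq_bigr => i _ /=.
move: (f (y + evec i)) (f y) (f (y - evec i)) (g (y + evec i)) (g y) (g (y - evec i)) => *.
ring.
Qed.

Lemma lapD f g y : lap (fun z => f z + g z) y = lap f y + lap g y.
Proof.
by rewrite -[lap g y]mul1r -lapDM; congr (lap _ y); apply: funext => z; rewrite mul1r.
Qed.

Lemma lapB f g y : lap (fun z => f z - g z) y = lap f y - lap g y.
Proof.
by rewrite -mulN1r -lapDM; congr (lap _ y); apply: funext => z; rewrite mulN1r.
Qed.

Lemma lap_cst c y : lap (fun _ => c) y = 0.
Proof. by rewrite /lap big1 ?mulr0 // => i _; rewrite !subrr addr0. Qed.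

Lemma lap_ge0_min u y : (forall z, u y <= u z) -> 0 <= lap u y.
Proof.
move=> h; rewrite /lap mulr_ge0 ?invr_ge0 ?mulr_ge0 ?ler0n //.
by apply: sumr_ge0 => i _; rewrite addr_ge0 // subr_ge0.
Qed.

(* At a maximum every summand of [lap w x] is [<= 0], so [0 <= lap w x] forces them all to
   vanish. *)
Lemma lap_ge0_max_flat w x i : (forall z, w z <= w x) -> 0 <= lap w x ->
  w (x + evec i) = w x.
Proof.
move=> hm; rewrite /lap => h.
have hinv : 0 < (2 * d%:R : R)^-1.
  by rewrite invr_gt0 mulr_gt0 // ltr0n (leq_ltn_trans (leq0n i) (ltn_ord i)).
have hsum : \sum_(j < d) - ((w (x + evec j) - w x) + (w (x - evec j) - w x)) = 0.
  apply/eqP; rewrite eq_le; apply/andP; split.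
    by rewrite sumrN oppr_le0 -(pmulr_rge0 _ hinv).
  by apply: sumr_ge0 => j _; have := hm (x + evec j); have := hm (x - evec j); lra.
have summand_ge0 j : true -> 0 <= - ((w (x + evec j) - w x) + (w (x - evec j) - w x)).
  by move=> _; have := hm (x + evec j); have := hm (x - evec j); lra.
have := psumr_eq0P summand_ge0 hsum (i := i) isT.
have := hm (x + evec i); have := hm (x - evec i); move=> *; lra.
Qed.

Lemma lap_cvg (f : nat -> pt d -> R) g y :
  (forall z, (fun n => f n z) @ \oo --> g z) ->
  (fun n => lap (f n) y) @ \oo --> lap g y.
Proof.
move=> h; rewrite /lap; apply: cvgMl_tmp.
apply: (cvg_big (P := xpredT) add_continuous) => // i _.
by apply: cvgD; apply: cvgB.
Qed.

Lemma addr_evec_neq (x : pt d) i : (x + evec i == x) = false.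
Proof.
apply/negbTE/eqP => /(canRL (addKr x)); rewrite addNr => /matrixP /(_ 0 i).
by rewrite !mxE !eqxx.
Qed.

Lemma subr_evec_neq (x : pt d) i : (x - evec i == x) = false.
Proof.
apply/negbTE/eqP => /(canRL (addKr x)); rewrite addNr => /matrixP /(_ 0 i).
by rewrite !mxE !eqxx.
Qed.

Lemma sqnormDB_evec (x : pt d) i :
  sqnorm R (x + evec i) + sqnorm R (x - evec i) = 2 * sqnorm R x + 2.
Proof.
rewrite /sqnorm -big_split mulr_sumr /=.
rewrite [X in _ = _ + X](_ : 2 = \sum_(j < d) (if j == i then 2 else 0 : R)); last first.
  by rewrite -big_mkcond big_pred1_eq.
rewrite -big_split; apply: eq_bigr => j _ /=; rewrite /evec !mxE eqxx /=.
case: (j == i) => /=; rewrite ?addr0 ?subr0 ?intrD ?intrB; move: ((x 0 j)%:~R : R) => a; ring.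
Qed.

Hypothesis d_gt0 : (0 < d)%N.

Let dR_neq0 : (d%:R : R) != 0. Proof. by rewrite pnatr_eq0 -lt0n. Qed.

Lemma dlapE (xi : R) f y : 0 < xi -> xi ^+ 2 * dlap xi f y = lap f y.
Proof.
move=> xi_gt0; rewrite /dlap /lap; have xi_neq0 : xi != 0 by rewrite gt_eqF.
by field; rewrite dR_neq0.
Qed.

Lemma toppleE (xi : R) x eta y : 0 < xi ->
  topple xi x eta y = eta y + Num.max (eta x) 0 * lap (Defs.dirac R x) y.
Proof. by move=> xi_gt0; rewrite /topple dlapE. Qed.

Lemma lap_dirac_self x : lap (Defs.dirac R x) x = -1.
Proof.
rewrite /lap /Defs.dirac eqxx.
under eq_bigr do rewrite addr_evec_neq subr_evec_neq.
by rewrite sumr_const card_ord -mulr_natr; field.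
Qed.

(* Summation by parts against [lap |.|^2 = 1]: toppling raises the second moment by the mass
   toppled. *)
Lemma sum_sqnorm_lap_dirac (F : seq (pt d)) x : uniq F ->
  x \in F -> (forall i, x + evec i \in F) -> (forall i, x - evec i \in F) ->
  \sum_(y <- F) sqnorm R y * lap (Defs.dirac R x) y = 1.
Proof.
move=> uF xF xDF xBF.
have pick a : a \in F -> \sum_(y <- F) sqnorm R y * (if y == a then 1 else 0) = sqnorm R a.
  move=> aF; rewrite (bigD1_seq a) //= eqxx mulr1 big1 ?addr0 //.
  by move=> y /negbTE ->; rewrite mulr0.
under eq_bigr do rewrite /lap mulrCA mulr_sumr.
rewrite -mulr_sumr exchange_big /=.
transitivity ((2 * d%:R)^-1 * \sum_(i < d) (2 : R)); last first.
  by rewrite sumr_const card_ord -mulr_natr; field.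
congr (_ * _); apply: eq_bigr => i _.
have diracD y : Defs.dirac R x (y + evec i) = if y == x - evec i then 1 else 0.
  rewrite /Defs.dirac; congr (if _ then _ else _).
  by apply/eqP/eqP => [<-|->]; [rewrite addrK | rewrite subrK].
have diracB y : Defs.dirac R x (y - evec i) = if y == x + evec i then 1 else 0.
  rewrite /Defs.dirac; congr (if _ then _ else _).
  by apply/eqP/eqP => [<-|->]; [rewrite subrK | rewrite addrK].
under eq_bigr => y _.
  rewrite diracD diracB /Defs.dirac mulrDr !mulrBr.
  over.
rewrite big_split !sumrB /= !pick //.
have := sqnormDB_evec x i; lra.
Qed.

End Laplacian.

Section LatticeBall.
Variables (R : realType) (d : nat) (xi Rad : R).
Hypothesis xi_gt0 : 0 < xi.

Lemma inBall_le (Rad' : R) (k : pt d) : 0 <= Rad -> Rad <= Rad' ->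
  inBall xi Rad k -> inBall xi Rad' k.
Proof. by rewrite /inBall => Rad_ge0 RadRad' /lt_le_trans; apply; rewrite !expr2; nra. Qed.

Definition box (N : nat) : seq (pt d) :=
  [seq \row_j ((nat_of_ord (g j))%:Z - N%:Z)
     | g : {ffun 'I_d -> 'I_(2 * N).+1} <- enum {ffun 'I_d -> 'I_(2 * N).+1}].

Lemma mem_box N (k : pt d) : (forall j, `|k 0 j| <= N%:Z) -> k \in box N.
Proof.
move=> hk; apply/mapP.
exists [ffun j => inord (absz (k 0 j + N%:Z))]; first by rewrite mem_enum.
apply/matrixP => a j; rewrite !mxE ffunE (ord1 a).
have := hk j => hj.
rewrite inordK; last by lia.
by rewrite abszE ger0_norm ?addrK //; lia.
Qed.

Definition ball_radius_bound : nat := Num.bound (`|Rad| / xi).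

Lemma inBall_coord_le (k : pt d) : inBall xi Rad k -> forall j, `|k 0 j| < ball_radius_bound%:Z.
Proof.
rewrite /inBall /sqnorm => hk j; set N := ball_radius_bound.
have RadN : `|Rad| < xi * N%:R.
  by rewrite mulrC -ltr_pdivrMr // archi_boundP // divr_ge0 // ltW.
clearbody N.
have kj : ((k 0 j)%:~R : R) ^+ 2 <= \sum_(i < d) ((k 0 i)%:~R : R) ^+ 2.
  by rewrite (bigD1 j) //= lerDl sumr_ge0 // => *; exact: sqr_ge0.
have kjN : ((k 0 j)%:~R : R) ^+ 2 < (N%:R) ^+ 2.
  have xi2_gt0 : 0 < xi ^+ 2 by rewrite exprn_gt0.
  rewrite -(ltr_pM2l xi2_gt0).
  apply: (le_lt_trans (ler_wpM2l (ltW xi2_gt0) kj)); apply: (lt_le_trans hk).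
  rewrite -real_normK ?num_real // -exprMn ltW // ltrXn2r // ?normr_ge0 //.
have : ((k 0 j) ^+ 2)%:~R < ((N%:Z) ^+ 2)%:~R :> R by rewrite !rmorphXn.
rewrite ltr_int !expr2 => h; nia.
Qed.

Lemma ball_nbhd_finite : exists2 F : seq (pt d), uniq F & forall x, inBall xi Rad x ->
  [/\ x \in F, forall i, x + evec i \in F & forall i, x - evec i \in F].
Proof.
exists (undup (box ball_radius_bound)); first exact: undup_uniq.
move=> x /inBall_coord_le hx.
have nbr i j :
    `|(x + evec i) 0 j| <= ball_radius_bound%:Z /\ `|(x - evec i) 0 j| <= ball_radius_bound%:Z.
  by rewrite /evec !mxE eqxx /=; have := hx j; case: (j == i) => /=; lia.
split; [|move=> i..]; rewrite mem_undup; apply: mem_box => j.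
- by have := hx j; lia.
- exact: (nbr i j).1.
- exact: (nbr i j).2.
Qed.

Lemma iter_addr_evec_escape i (x : pt d) :
  exists n, ~ inBall xi Rad (iter n (fun z => z + evec i) x).
Proof.
have coord n : (iter n (fun z => z + evec i) x) 0 i = x 0 i + n%:Z.
  elim: n => [|n IH] /=; first by rewrite addr0.
  by rewrite !mxE IH /evec ?mxE !eqxx /=; lia.
exists (addn (absz (x 0 i)) ball_radius_bound) => /inBall_coord_le /(_ i).
rewrite coord; lia.
Qed.

End LatticeBall.

(* Least-action description of [GDS_B(tau) = eta], with odometer [u] (the total mass emitted
   from each site). *)
Definition odometer (R : realType) (d : nat) (B : pt d -> Prop) (tau u eta : pt d -> R) : Prop :=
  [/\ forall x, 0 <= u x, forall x, ~ B x -> u x = 0,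
      forall y, eta y = tau y + lap u y, forall x, B x -> eta x <= 0
    & forall x, 0 < u x -> 0 <= eta x].

Section ToppleOdometer.
Variables (R : realType) (d : nat) (xi Rad : R) (s : nat -> pt d) (tau eta : pt d -> R).
Hypotheses (d_gt0 : (0 < d)%N) (xi_gt0 : 0 < xi).
Hypotheses (s_exh : exhaustive_seq xi Rad s) (s_lim : topple_limit xi s tau eta).

Local Notation cfg := (topple_seq xi s tau).

Definition toppled_mass n : R := Num.max (cfg n (s n)) 0.

Definition partial_odometer n z : R :=
  \sum_(m < n) (if s m == z then toppled_mass m else 0).

Lemma toppled_mass_ge0 n : 0 <= toppled_mass n.
Proof. by rewrite le_max lexx orbT. Qed.

Lemma topple_seqS n y :
  cfg n.+1 y = cfg n y + toppled_mass n * lap (Defs.dirac R (s n)) y.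
Proof. exact: toppleE. Qed.

Lemma partial_odometerS n z :
  partial_odometer n.+1 z = partial_odometer n z + toppled_mass n * Defs.dirac R (s n) z.
Proof.
rewrite /partial_odometer big_ord_recr /=; congr (_ + _).
by rewrite /Defs.dirac (eq_sym z); case: ifP => _; rewrite ?mulr1 ?mulr0.
Qed.

Lemma topple_seq_odometerE n y : cfg n y = tau y + lap (partial_odometer n) y.
Proof.
elim: n y => [|n IH] y.
  rewrite (_ : partial_odometer 0 = fun _ => 0) ?lap_cst ?addr0 //.
  by apply: funext => z; rewrite /partial_odometer big_ord0.
rewrite topple_seqS IH -addrA -lapDM.
by congr (_ + lap _ _); apply: funext => z; rewrite partial_odometerS.
Qed.

Lemma partial_odometer_ge0 n z : 0 <= partial_odometer n z.
Proof. by apply: sumr_ge0 => m _; case: ifP => // _; exact: toppled_mass_ge0. Qed.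

Lemma partial_odometer_nondecreasing z : nondecreasing_seq (partial_odometer ^~ z).
Proof.
apply/nondecreasing_seqP => n; rewrite partial_odometerS lerDl mulr_ge0 ?toppled_mass_ge0 //.
by rewrite /Defs.dirac; case: ifP.
Qed.

Lemma partial_odometer_out n z : ~ inBall xi Rad z -> partial_odometer n z = 0.
Proof.
case: s_exh => s_in _ zout; apply: big1 => m _.
by case: eqP => // smz; case: zout; rewrite -smz.
Qed.

Section SecondMoment.
Variable F : seq (pt d).
Hypotheses (F_uniq : uniq F) (F_nbhd : forall x, inBall xi Rad x ->
  [/\ x \in F, forall i, x + evec i \in F & forall i, x - evec i \in F]).

Let moment n := \sum_(y <- F) sqnorm R y * cfg n y.

Let momentS n : moment n.+1 = moment n + toppled_mass n.
Proof.
rewrite /moment; under eq_bigr do rewrite topple_seqS mulrDr mulrCA.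
case: s_exh => /(_ n) /F_nbhd [snF sDF sBF] _.
by rewrite big_split -mulr_sumr sum_sqnorm_lap_dirac ?mulr1.
Qed.

Let moment_cvg : moment @ \oo --> \sum_(y <- F) sqnorm R y * eta y.
Proof.
apply: (cvg_big (P := xpredT) add_continuous) => // y _.
by apply: cvgMl_tmp; apply: s_lim.
Qed.

Lemma partial_odometer_le_moment n z :
  partial_odometer n z <= \sum_(y <- F) sqnorm R y * eta y - moment 0.
Proof.
have momentE k : moment k = moment 0 + \sum_(m < k) toppled_mass m.
  by elim: k => [|k IH]; rewrite ?big_ord0 ?addr0 // momentS IH big_ord_recr addrA.
have moment_le k : moment k <= \sum_(y <- F) sqnorm R y * eta y.
  apply: (cvg_ge_io moment_cvg) => N; exists (maxn N k); first exact: leq_maxl.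
  rewrite (momentE k) (momentE (maxn N k)) lerD2l.
  rewrite (big_ord_widen _ _ (leq_maxr N k)) big_mkcond /=.
  by apply: ler_sum => m _; case: ifP => // _; exact: toppled_mass_ge0.
rewrite lerBrDl; apply: le_trans (moment_le n); rewrite (momentE n) lerD2l.
by apply: ler_sum => m _; case: ifP => // _; exact: toppled_mass_ge0.
Qed.

End SecondMoment.

Definition final_odometer z : R := sup (range (partial_odometer ^~ z)).

Lemma partial_odometer_cvg z : partial_odometer ^~ z @ \oo --> final_odometer z.
Proof.
apply: nondecreasing_cvgn; first exact: partial_odometer_nondecreasing.
have [F F_uniq F_nbhd] := ball_nbhd_finite d Rad xi_gt0.
exists (\sum_(y <- F) sqnorm R y * eta y - \sum_(y <- F) sqnorm R y * tau y).
by move=> _ [n _ <-]; exact: partial_odometer_le_moment.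
Qed.
Arguments partial_odometer_cvg : clear implicits.

Lemma final_odometer_ge0 z : 0 <= final_odometer z.
Proof.
apply: (cvg_ge_io (partial_odometer_cvg z)) => N.
by exists N => //; exact: partial_odometer_ge0.
Qed.

Lemma final_odometer_out z : ~ inBall xi Rad z -> final_odometer z = 0.
Proof.
move=> zout; have po0 : partial_odometer ^~ z @ \oo --> 0.
  by under eq_cvg do rewrite partial_odometer_out //; exact: cvg_cst.
exact: cvg_unique _ (partial_odometer_cvg z) po0.
Qed.

Lemma topple_limitE y : eta y = tau y + lap final_odometer y.
Proof.
have cfg_cvg : cfg ^~ y @ \oo --> tau y + lap final_odometer y.
  under eq_cvg do rewrite topple_seq_odometerE.
  by apply: cvgD; [exact: cvg_cst | exact: lap_cvg partial_odometer_cvg].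
exact: cvg_unique _ (@s_lim y) cfg_cvg.
Qed.

Lemma topple_limit_le0 x : inBall xi Rad x -> eta x <= 0.
Proof.
case: s_exh => _ s_often xB; apply: (cvg_le_io (@s_lim x)) => N.
have [m Nm smx] := s_often x xB N; exists m.+1; first exact: leqW.
rewrite topple_seqS smx lap_dirac_self // /toppled_mass smx.
by rewrite mulrN1 subr_le0 le_max lexx.
Qed.

(* Toppling at [x] empties a nonnegative site, toppling elsewhere only adds mass to it. *)
Lemma topple_seqS_ge0 n x : 0 <= cfg n x -> 0 <= cfg n.+1 x.
Proof.
rewrite topple_seqS; case: (eqVneq (s n) x) => [<-|snx] hx.
  by rewrite lap_dirac_self // /toppled_mass (max_l hx) mulrN1 subrr.
apply: addr_ge0 hx _; apply: mulr_ge0 (toppled_mass_ge0 n) _.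
by apply: lap_ge0_min => z; rewrite /Defs.dirac eq_sym (negbTE snx); case: ifP.
Qed.

Lemma topple_seq_ge0_after_firing m k : 0 < toppled_mass m -> 0 <= cfg (k + m.+1) (s m).
Proof.
move=> fired; elim: k => [|k IH]; last by rewrite addSn; exact: topple_seqS_ge0.
apply: topple_seqS_ge0; move: fired; rewrite /toppled_mass lt_max ltxx orbF.
exact: ltW.
Qed.

Lemma topple_limit_ge0 x : 0 < final_odometer x -> 0 <= eta x.
Proof.
move=> ux; have [n _ po_gt0] := cvgr_gt _ (partial_odometer_cvg x) _ ux.
have [m] : exists m : 'I_n, 0 < (if s m == x then toppled_mass m else 0).
  apply/existsP; apply: contraLR (po_gt0 n (leqnn n)) => /existsPn none.
  by rewrite -leNgt; apply: sumr_le0 => m _; rewrite leNgt; exact: none.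
case: eqP => [smx fired|_]; last by rewrite ltxx.
apply: (cvg_ge_io (@s_lim x)) => N.
exists (N + m.+1)%N; first exact: leq_addr.
by rewrite -smx; exact: topple_seq_ge0_after_firing.
Qed.

Lemma odometer_topple_limit : odometer (inBall xi Rad) tau final_odometer eta.
Proof.
split; [exact: final_odometer_ge0 | exact: final_odometer_out | exact: topple_limitE
       | exact: topple_limit_le0 | exact: topple_limit_ge0].
Qed.

End ToppleOdometer.

Section OdometerComparison.
Variables (R : realType) (d : nat).

Lemma odometer_comp (B1 B2 : pt d -> Prop) (tau u1 eta1 u2 eta2 : pt d -> R) :
  (forall x, B1 x -> B2 x) -> odometer B1 tau u1 eta1 -> odometer B2 eta1 u2 eta2 ->
  odometer B2 tau (fun z => u1 z + u2 z) eta2.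
Proof.
move=> B12 [u1_ge0 u1_out eta1E _ eta1_ge0] [u2_ge0 u2_out eta2E eta2_le0 eta2_ge0].
split => // [x | x xB2 | y | x].
- exact: addr_ge0.
- by rewrite u1_out ?u2_out ?addr0 // => /B12.
- by rewrite eta2E eta1E lapD addrA.
case: (ltP 0 (u2 x)) => [/eta2_ge0 // | u2x_le0].
have u2x0 : u2 x = 0 by apply/eqP; rewrite eq_le u2x_le0 u2_ge0.
rewrite u2x0 addr0 eta2E => /eta1_ge0 eta1x_ge0; apply: addr_ge0 eta1x_ge0 _.
by apply: lap_ge0_min => z; rewrite u2x0.
Qed.

(* Maximum principle for [u - u']: where it is positive, [eta >= 0 >= eta'] makes
   [lap (u - u')] nonnegative. *)
Lemma odometer_diff_max_flat (B : pt d -> Prop) (tau u u' eta eta' : pt d -> R) z i :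
  odometer B tau u eta -> odometer B tau u' eta' ->
  (forall y, u y - u' y <= u z - u' z) -> u' z < u z ->
  u (z + evec i) - u' (z + evec i) = u z - u' z.
Proof.
move=> [_ u_out etaE _ eta_ge0] [u'_ge0 u'_out eta'E eta'_le0 _] zmax u'u.
have zB : B z.
  by case: (pselect (B z)) => // zout; move: u'u; rewrite u_out // u'_out // ltxx.
apply: (lap_ge0_max_flat (w := fun y => u y - u' y)) => //.
rewrite lapB subr_ge0 -(lerD2l (tau z)) -etaE -eta'E.
exact: le_trans (eta'_le0 z zB) (eta_ge0 z (le_lt_trans (u'_ge0 z) u'u)).
Qed.

Hypothesis d_gt0 : (0 < d)%N.

Lemma odometer_le (xi Rad : R) (tau u u' eta eta' : pt d -> R) : 0 < xi ->
  odometer (inBall xi Rad) tau u eta -> odometer (inBall xi Rad) tau u' eta' ->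
  forall x, u x <= u' x.
Proof.
move=> xi_gt0 S S' x; rewrite leNgt; apply/negP => u'u.
case: (S) (S') => _ u_out _ _ _ [_ u'_out _ _ _].
pose w y := u y - u' y.
have w_out y : ~ inBall xi Rad y -> w y = 0 by move=> yout; rewrite /w u_out // u'_out // subrr.
have wx_gt0 : 0 < w x by rewrite subr_gt0.
have [F _ F_nbhd] := ball_nbhd_finite d Rad xi_gt0.
have xB : inBall xi Rad x.
  by case: (pselect (inBall xi Rad x)) => // /w_out wx0; move: wx_gt0; rewrite wx0 ltxx.
have [xF _ _] := F_nbhd x xB.
have [z zF zmax] := seq_argmax w xF.
have wmax y : w y <= w z.
  case: (pselect (inBall xi Rad y)) => [/F_nbhd [yF _ _] | /w_out ->]; first exact: zmax.
  exact: le_trans (ltW wx_gt0) (zmax x xF).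
have wz_gt0 : 0 < w z := lt_le_trans wx_gt0 (wmax x).
pose i0 : 'I_d := Ordinal d_gt0.
have flat n : w (iter n (fun y => y + evec i0) z) = w z.
  elim: n => [//|n IH]; rewrite iterS; move: (iter n _ z) IH => y0 wy0.
  have y0max y : u y - u' y <= u y0 - u' y0 by rewrite -/(w y) -/(w y0) wy0 wmax.
  have y0pos : u' y0 < u y0 by rewrite -subr_gt0 -/(w y0) wy0.
  by rewrite /w (odometer_diff_max_flat _ S S' y0max y0pos) -/(w y0) wy0.
have [n /w_out] := iter_addr_evec_escape Rad xi_gt0 i0 z.
by rewrite flat => wz0; move: wz_gt0; rewrite wz0 ltxx.
Qed.

Lemma odometer_unique (xi Rad : R) (tau u u' eta eta' : pt d -> R) : 0 < xi ->
  odometer (inBall xi Rad) tau u eta -> odometer (inBall xi Rad) tau u' eta' -> eta = eta'.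
Proof.
move=> xi_gt0 S S'.
have uu' : u = u'.
  apply: funext => x; apply: le_anti.
  by rewrite (odometer_le xi_gt0 S S') (odometer_le xi_gt0 S' S).
case: S S' => _ _ etaE _ _ [_ _ eta'E _ _].
by apply: funext => y; rewrite etaE eta'E uu'.
Qed.

End OdometerComparison.

Theorem proposition3p9 (R : realType) (d : nat) (xi R1 R2 : R)
  (sigma : pt d -> R) (s1 s2 s3 : nat -> pt d) (eta1 eta2 eta3 : pt d -> R) :
  (2 <= d)%N -> 0 < xi ->
  gen_mass_config sigma ->
  0 < R1 ->
  (forall y, sigma y != 0 -> inBall xi R1 y) ->
  R1 + xi < R2 ->
  (* eta1 = GDS_{R1}(sigma) *)
  exhaustive_seq xi R1 s1 -> topple_limit xi s1 sigma eta1 ->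
  (* eta2 = GDS_{R2}(eta1) *)
  exhaustive_seq xi R2 s2 -> topple_limit xi s2 eta1 eta2 ->
  (* eta3 = GDS_{R2}(sigma) *)
  exhaustive_seq xi R2 s3 -> topple_limit xi s3 sigma eta3 ->
  eta2 = eta3.
Proof.
move=> d_ge2 xi_gt0 _ R1_gt0 _ R12 ex1 lim1 ex2 lim2 ex3 lim3.
have d_gt0 : (0 < d)%N := ltnW d_ge2.
have ball12 (k : pt d) : inBall xi R1 k -> inBall xi R2 k.
  by apply: inBall_le; [exact: ltW | lra].
apply: (odometer_unique d_gt0 xi_gt0 _ (odometer_topple_limit d_gt0 xi_gt0 ex3 lim3)).
exact: odometer_comp ball12 (odometer_topple_limit d_gt0 xi_gt0 ex1 lim1)
  (odometer_topple_limit d_gt0 xi_gt0 ex2 lim2).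
Qed.
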